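(* For each $n$ let $m=m_n$ be the order of some element of $S_n$, and assume $m_n$ has a divisor $d_n$ with $3\leq d_n$ and $d_n=o(n^{1/2})$. Then there are functions $a(n)=o(n^{1/2})$ and $b(n)=o(n)$ such that the proportion of elements of order $m_n$ in $S_n$ having at most $a(n)$ fixed points and at most $b(n)$ $2$-cycles tends to $1$ as $n\to\infty$.
   Context: Asymptotic notation is with respect to $n\to\infty$. *)

From HB Require Import structures.
From mathcomp Require Import all_boot all_order all_algebra all_fingroup.
From mathcomp Require Import reals.
Set Implicit Arguments. Unset Strict Implicit. Unset Printing Implicit Defensive.
Import Order.TTheory GRing.Theory Num.Theory.
Local Open Scope ring_scope.

Definition nfix (n : nat) (s : 'S_n) : nat := #|[set x | s x == x]|.

Definition ntwocycles (n : nat) (s : 'S_n) : nat :=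
  #|[set c in porbits s | #|c| == 2]|.

Definition littleo (R : realType) (f g : nat -> R) : Prop :=
  forall eps : R, 0 < eps -> exists N : nat, forall n : nat, (N <= n)%N ->
    `|f n| <= eps * `|g n|.

Definition tends_to (R : realType) (u : nat -> R) (l : R) : Prop :=
  forall eps : R, 0 < eps -> exists N : nat, forall n : nat, (N <= n)%N ->
    `|u n - l| <= eps.

Definition prop_good (R : realType) (n m : nat) (a b : R) : R :=
  (#|[set s : 'S_n | (#[s]%g == m) && ((nfix s)%:R <= a) && ((ntwocycles s)%:R <= b)]|%:R)
  / (#|[set s : 'S_n | #[s]%g == m]|%:R).

(* Let s have order m, and let x_0, ..., x_{d-1} be distinct fixed
   points of s, or smaller points of distinct 2-cycles (x_i, s x_i) of s.  The
   permutation c cycling the x_i (and the s x_i) commutes with s and c^d = 1, so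
   since d | m the product s c again has order m, provided the order of s is
   already witnessed off the x_i and s x_i (for 2-cycles: keep the least 2-cycle
   out of the x_i).  From s c, x_0 and s x_0 one recovers all x_i and then s.
   Hence (#{s of order m with at least F such points}) F^_d is at most
   #{t of order m} n for fixed points, and #{t of order m} n^2 for 2-cycles.
   With q = floor(n^(1/8)) and thresholds F = d + q^3 and F = d + q^7, the bound
   F^_d >= (F - d)^d >= q^9, resp. q^21 (as d >= 3), makes the exceptional
   proportion O(1/q), while d + q^3 = o(n^(1/2)) and d + q^7 = o(n). *)

From HB Require Import structures.
From mathcomp Require Import all_boot all_order all_algebra all_fingroup.
From mathcomp Require Import reals cyclic.
Import Order.TTheory GRing.Theory Num.Theory.
Set Implicit Arguments. Unset Strict Implicit. Unset Printing Implicit Defensive.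

Definition perm_of (T : finType) (f : T -> T) : {perm T} :=
  if injectiveP f is ReflectT f_inj then perm f_inj else 1%g.

Lemma perm_ofE (T : finType) (f : T -> T) : injective f -> perm_of f =1 f.
Proof. by rewrite /perm_of; case: injectiveP => // f_inj _ z; rewrite permE. Qed.

Lemma eq_perm_of (T : finType) (f g : T -> T) : f =1 g -> perm_of f = perm_of g.
Proof.
rewrite /perm_of => fg.
case: injectiveP => [f_inj | f_ninj]; case: injectiveP => [g_inj | g_ninj] //.
- by apply/permP => z; rewrite !permE.
- by case: g_ninj => a b; rewrite -!fg => /f_inj.
- by case: f_ninj => a b; rewrite !fg => /g_inj.
Qed.

Lemma iter_ordS d k (i : 'I_d) : val (iter k (@ordS d) i) = (i + k) %% d.
Proof.
elim: k => [|k IHk] /=; first by rewrite addn0 modn_small.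
by rewrite IHk addnS -addn1 modnDml addn1.
Qed.

Lemma iter_ordS_reach d (i0 i : 'I_d) : iter (i + (d - i0)) (@ordS d) i0 = i.
Proof.
apply: val_inj; rewrite iter_ordS addnCA subnKC ?(ltnW (ltn_ord i0)) //.
by rewrite modnDr modn_small.
Qed.

Lemma iter_ordS_id d (i : 'I_d) : iter d (@ordS d) i = i.
Proof. by apply: val_inj; rewrite iter_ordS modnDr modn_small. Qed.

Section PairedCycle.
Variables (T : finType) (d : nat) (x y : 'I_d -> T).

Definition paired_cycle_fun (z : T) : T :=
  if [pick i | x i == z] is Some i then x (ordS i)
  else if [pick i | y i == z] is Some i then y (ordS i) else z.

Definition paired_cycle : {perm T} := perm_of paired_cycle_fun.

Hypotheses (x_inj : injective x) (y_inj : injective y).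
Hypothesis y_eq_or_disjoint : y =1 x \/ forall i j, y i != x j.

Lemma paired_cycle_fun_x i : paired_cycle_fun (x i) = x (ordS i).
Proof. by rewrite /paired_cycle_fun; case: pickP => [j /eqP/x_inj -> | /(_ i)/eqP]. Qed.

Lemma paired_cycle_fun_y i : paired_cycle_fun (y i) = y (ordS i).
Proof.
rewrite /paired_cycle_fun; case: pickP => [j /eqP xj_yi | _].
  case: y_eq_or_disjoint => [y_x | y_x]; last by move/eqP: (y_x i j); rewrite xj_yi.
  by move: xj_yi; rewrite -y_x => /y_inj ->; rewrite y_x.
by case: pickP => [j /eqP/y_inj -> | /(_ i)/eqP].
Qed.

Lemma paired_cycle_fun_out z :
  z \notin codom x -> z \notin codom y -> paired_cycle_fun z = z.
Proof.
move=> zNx zNy; rewrite /paired_cycle_fun.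
case: pickP => [i /eqP xi_z | _]; first by rewrite -xi_z codom_f in zNx.
by case: pickP => [i /eqP yi_z | _]; first by rewrite -yi_z codom_f in zNy.
Qed.

Lemma iter_paired_cycle_fun (f : 'I_d -> T) :
  (forall i, paired_cycle_fun (f i) = f (ordS i)) ->
  forall k i, iter k paired_cycle_fun (f i) = f (iter k (@ordS d) i).
Proof. by move=> fS; elim=> //= k IHk i; rewrite IHk fS. Qed.

Lemma iter_paired_cycle_fun_id : iter d paired_cycle_fun =1 id.
Proof.
move=> z; have [/codomP[i ->] | zNx] := boolP (z \in codom x).
  by rewrite (iter_paired_cycle_fun paired_cycle_fun_x) iter_ordS_id.
have [/codomP[i ->] | zNy] := boolP (z \in codom y).
  by rewrite (iter_paired_cycle_fun paired_cycle_fun_y) iter_ordS_id.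
by elim: d => //= k ->; rewrite paired_cycle_fun_out.
Qed.

Lemma paired_cycle_fun_inj : injective paired_cycle_fun.
Proof.
case: (posnP d) => [d0 | d_gt0].
  have outE z : paired_cycle_fun z = z.
    apply: paired_cycle_fun_out; apply/codomP => -[i _];
      by have := ltn_ord i; rewrite [X in _ < X]d0.
  by move=> z1 z2; rewrite !outE.
apply: (can_inj (g := iter d.-1 paired_cycle_fun)) => z.
by rewrite -iterSr prednK // iter_paired_cycle_fun_id.
Qed.

Lemma paired_cycle_x i : paired_cycle (x i) = x (ordS i).
Proof. by rewrite perm_ofE ?paired_cycle_fun_x //; apply: paired_cycle_fun_inj. Qed.

Lemma paired_cycle_y i : paired_cycle (y i) = y (ordS i).
Proof. by rewrite perm_ofE ?paired_cycle_fun_y //; apply: paired_cycle_fun_inj. Qed.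

Lemma paired_cycle_out z : z \notin codom x -> z \notin codom y -> paired_cycle z = z.
Proof.
by move=> zNx zNy; rewrite perm_ofE ?paired_cycle_fun_out //; apply: paired_cycle_fun_inj.
Qed.

Lemma paired_cycle_expd : (paired_cycle ^+ d)%g = 1%g.
Proof.
apply/permP => z; rewrite permX perm1 -[RHS]iter_paired_cycle_fun_id.
by apply: eq_iter; apply: perm_ofE; apply: paired_cycle_fun_inj.
Qed.

End PairedCycle.

Lemma eq_paired_cycle (T : finType) d (x y x' y' : 'I_d -> T) :
  x =1 x' -> y =1 y' -> paired_cycle x y = paired_cycle x' y'.
Proof.
move=> xx' yy'; apply: eq_perm_of => z; rewrite /paired_cycle_fun.
have -> : [pick i | x i == z] = [pick i | x' i == z] by apply: eq_pick => i; rewrite xx'.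
have -> : [pick i | y i == z] = [pick i | y' i == z] by apply: eq_pick => i; rewrite yy'.
by case: pickP => [i _ | _]; [rewrite xx' | case: pickP => // i _; rewrite yy'].
Qed.

Lemma order_mulg_commute (gT : finGroupType) (s c : gT) :
  commute s c -> (c ^+ #[s] = 1)%g ->
  (forall k, (s * c) ^+ k = 1 -> s ^+ k = 1)%g -> #[s * c]%g = #[s]%g.
Proof.
move=> scC cs1 sck; apply/eqP; rewrite eqn_dvd; apply/andP; split.
  by rewrite order_dvdn expgMn // expg_order cs1 mulg1.
by rewrite order_dvdn; apply/eqP/sck; apply: expg_order.
Qed.

Section Switch.
Variables (T : finType) (d : nat).

Definition switchable (s : {perm T}) (x : 'I_d -> T) : Prop :=
  [/\ injective x, forall i, s (s (x i)) = x i,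
      (forall i, s (x i) = x i) \/ (forall i j, s (x i) != x j) &
      forall k, (forall z, z \notin codom x -> z \notin codom (s \o x) ->
                  (s ^+ k)%g z = z) ->
        forall i, (s ^+ k)%g (x i) = x i].

Definition switch (s : {perm T}) (x : 'I_d -> T) : {perm T} :=
  (s * paired_cycle x (s \o x))%g.

Section SwitchOf.
Variables (s : {perm T}) (x : 'I_d -> T).
Hypothesis sx_switchable : switchable s x.

Let c := paired_cycle x (s \o x).

Let x_inj : injective x. Proof. by case: sx_switchable. Qed.
Let s_invol i : s (s (x i)) = x i. Proof. by case: sx_switchable. Qed.
Let sx_inj : injective (s \o x). Proof. by move=> i j /= /perm_inj/x_inj. Qed.
Let sx_eq_or_disjoint : s \o x =1 x \/ forall i j, s (x i) != x j.
Proof. by case: sx_switchable. Qed.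

Let c_x i : c (x i) = x (ordS i).
Proof. exact: paired_cycle_x. Qed.
Let c_sx i : c (s (x i)) = s (x (ordS i)).
Proof. exact: (paired_cycle_y x_inj sx_inj sx_eq_or_disjoint). Qed.
Let c_out z : z \notin codom x -> z \notin codom (s \o x) -> c z = z.
Proof. exact: paired_cycle_out. Qed.

Lemma switch_x i : switch s x (x i) = s (x (ordS i)).
Proof. by rewrite permM. Qed.

Lemma switch_sx i : switch s x (s (x i)) = x (ordS i).
Proof. by rewrite permM s_invol c_x. Qed.

Let s_preserves_out z : z \notin codom x -> z \notin codom (s \o x) ->
  s z \notin codom x /\ s z \notin codom (s \o x).
Proof.
move=> zNx zNsx; split; apply/negP => /codomP[i /= szE].
  have /perm_inj z_sxi : s z = s (s (x i)) by rewrite s_invol.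
  by move/negP: zNsx; apply; apply/codomP; exists i.
by move/negP: zNx; apply; apply/codomP; exists i; apply: (perm_inj szE).
Qed.

Lemma commute_switch : commute s c.
Proof.
apply/permP => z; rewrite !permM.
have [/codomP[i ->] | zNx] := boolP (z \in codom x); first by rewrite c_x c_sx.
have [/codomP[i /= ->] | zNsx] := boolP (z \in codom (s \o x)).
  by rewrite c_sx !s_invol c_x.
by have [sNx sNsx] := s_preserves_out zNx zNsx; rewrite !c_out.
Qed.

Lemma order_switch : d %| #[s]%g -> #[switch s x]%g = #[s]%g.
Proof.
case/dvdnP=> j ord_s; apply: order_mulg_commute; first exact: commute_switch.
  by rewrite ord_s mulnC expgM (paired_cycle_expd x_inj sx_inj sx_eq_or_disjoint) expg1n.
move=> k sck1.
have sk_out z : z \notin codom x -> z \notin codom (s \o x) -> (s ^+ k)%g z = z.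
  move=> zNx zNsx; have ck_z : (c ^+ k)%g z = z.
    by rewrite permX; elim: k {sck1} => //= k ->; rewrite c_out.
  have := congr1 (fun p : {perm T} => p z) sck1.
  rewrite expgMn; last exact: commute_switch.
  by rewrite (commuteX2 k k commute_switch) permM ck_z perm1.
have [_ _ _ sk_x] := sx_switchable; apply/permP => z; rewrite perm1.
have [/codomP[i ->] | zNx] := boolP (z \in codom x); first exact: sk_x.
have [/codomP[i /= ->] | zNsx] := boolP (z \in codom (s \o x)); last exact: sk_out.
by rewrite -permM -expgS expgSr permM sk_x.
Qed.

End SwitchOf.

Lemma switch_inj (s s' : {perm T}) (x x' : 'I_d -> T) (i0 : 'I_d) :
  switchable s x -> switchable s' x' -> switch s x = switch s' x' ->
  x i0 = x' i0 -> s (x i0) = s' (x' i0) -> s = s' /\ x =1 x'.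
Proof.
move=> sx s'x' t_eq x_eq0 sx_eq0.
have orbit_eq k : x (iter k (@ordS d) i0) = x' (iter k (@ordS d) i0) /\
                  s (x (iter k (@ordS d) i0)) = s' (x' (iter k (@ordS d) i0)).
  elim: k => [|k [x_eq sx_eq]] //=; split.
    by rewrite -(switch_sx sx) -(switch_sx s'x') t_eq sx_eq.
  by rewrite -(switch_x sx) -(switch_x s'x') t_eq x_eq.
have x_eq i : x i = x' i by rewrite -(iter_ordS_reach i0 i); case: (orbit_eq (i + (d - i0))).
have sx_eq : s \o x =1 s' \o x'.
  by move=> i /=; rewrite -(iter_ordS_reach i0 i); case: (orbit_eq (i + (d - i0))).
split=> //; apply: (mulIg (paired_cycle x (s \o x))).
by rewrite {2}(eq_paired_cycle x_eq sx_eq); apply: t_eq.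
Qed.

End Switch.

Lemma leq_ffact a b k : a <= b -> a ^_ k <= b ^_ k.
Proof. by move=> ab; rewrite !ffact_prod; apply: leq_prod => i _; apply: leq_sub2r. Qed.

Lemma expn_subn_leq_ffact n k : (n - k) ^ k <= n ^_ k.
Proof.
rewrite ffact_prod -[k in _ ^ k]card_ord -prod_nat_const.
by apply: leq_prod => i _; apply: leq_sub2l; apply: ltnW.
Qed.

Section SwitchCount.
Variables (T : finType) (d m : nat) (i0 : 'I_d).
Variables (A : {perm T} -> {set T}) (P : {set T * T}).
Hypothesis d_dvd_m : d %| m.
Hypothesis A_switchable : forall (s : {perm T}) (x : 'I_d -> T),
  #[s]%g = m -> injective x -> (forall i, x i \in A s) ->
  switchable s x /\ (x i0, s (x i0)) \in P.

Let O := [set s : {perm T} | #[s]%g == m].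
Let tuples (s : {perm T}) := [set x : {ffun 'I_d -> T} in ffun_on (A s) | injectiveb x].
Let D := [set p : {perm T} * {ffun 'I_d -> T} | (p.1 \in O) && (p.2 \in tuples p.1)].

Let card_D : #|D| = \sum_(s in O) #|A s| ^_ d.
Proof.
transitivity (\sum_(s in O) \sum_(x in tuples s) 1).
  by rewrite pair_big_dep sum1_card; apply: eq_card => p; rewrite inE.
by apply: eq_bigr => s _; rewrite sum1_card card_inj_ffuns_on card_ord.
Qed.

Let switch_pair (p : {perm T} * {ffun 'I_d -> T}) :=
  (switch p.1 p.2, (p.2 i0, p.1 (p.2 i0))).

Let switch_pair_switchable p :
  p \in D -> [/\ p.1 \in O, switchable p.1 p.2 & (p.2 i0, p.1 (p.2 i0)) \in P].
Proof.
rewrite !inE => /andP[O_s /andP[/ffun_onP x_A /injectiveP x_inj]].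
by have [? ?] := A_switchable (eqP O_s) x_inj x_A.
Qed.

Let switch_pair_inj : {in D &, injective switch_pair}.
Proof.
move=> [s x] [s' x'] /switch_pair_switchable[_ sx _] /switch_pair_switchable[_ s'x' _].
rewrite /switch_pair /= in sx s'x' * => -[t_eq x_eq0 sx_eq0].
have [-> x_eq] := switch_inj sx s'x' t_eq x_eq0 sx_eq0.
by congr (_, _); apply/ffunP.
Qed.

Let switch_pair_sub : switch_pair @: D \subset setX O P.
Proof.
apply/subsetP => _ /imsetP[p /switch_pair_switchable[O_s sx P_s] ->].
move: O_s; rewrite !inE /= => /eqP ord_s.
by rewrite (order_switch sx) ord_s ?eqxx.
Qed.

Lemma card_switchable_le F :
  #|[set s : {perm T} | (#[s]%g == m) && (F <= #|A s|)]| * F ^_ d <= #|O| * #|P|.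
Proof.
rewrite -cardsX; apply: leq_trans (subset_leq_card switch_pair_sub).
rewrite (card_in_imset switch_pair_inj) card_D -sum_nat_const.
rewrite [X in _ <= X](bigID (fun s => F <= #|A s|)) /=; apply: leq_trans (leq_addr _ _).
rewrite (eq_bigl (fun s => (s \in O) && (F <= #|A s|))) => [|s]; last by rewrite !inE.
by apply: leq_sum => s /andP[_]; apply: leq_ffact.
Qed.

End SwitchCount.

Lemma fixpoints_switchable (T : finType) d (s : {perm T}) (x : 'I_d -> T) :
  injective x -> (forall i, s (x i) = x i) -> switchable s x.
Proof.
move=> x_inj sx_x; split=> // [i | | k _ i]; [by rewrite !sx_x | by left |].
by rewrite permX; elim: k => //= k ->; rewrite sx_x.
Qed.

Lemma card_many_fixpoints_le n d m F : 0 < d -> d %| m ->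
  #|[set s : 'S_n | (#[s]%g == m) && (F <= nfix s)]| * F ^_ d
    <= #|[set s : 'S_n | #[s]%g == m]| * n.
Proof.
move=> d_gt0 d_dvd_m; pose diag := [set p : 'I_n * 'I_n | p.1 == p.2].
have card_diag : #|diag| <= n.
  rewrite -[n in _ <= n]card_ord; apply: (@leq_card_in _ _ fst) => -[a b] [a' b'].
  by rewrite !inE /= => /eqP <- /eqP <- ->.
apply: leq_trans (leq_mul (leqnn _) card_diag).
apply: (card_switchable_le (i0 := Ordinal d_gt0) (A := fun s => [set z | s z == z])) => //.
move=> s x _ x_inj x_fix; have sx_x i : s (x i) = x i.
  by apply/eqP; have := x_fix i; rewrite inE.
by split; [apply: fixpoints_switchable | rewrite inE /= sx_x].
Qed.

Definition two_cycle_heads n (s : 'S_n) :=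
  [set y | [&& s y != y, s (s y) == y & y < s y]].

(* The least head is excluded so that a power of s fixing it has even exponent. *)
Definition nonleast_two_cycle_heads n (s : 'S_n) :=
  [set y in two_cycle_heads s | [exists z in two_cycle_heads s, z < y]].

Lemma ntwocycles_le_heads n (s : 'S_n) : ntwocycles s <= #|two_cycle_heads s|.
Proof.
apply: leq_trans (leq_imset_card (porbit s) _); apply: subset_leq_card.
apply/subsetP => C; rewrite inE => /andP[/imsetP[y _ ->] /eqP card_y].
have ssy : s (s y) = y by have := iter_porbit s y; rewrite card_y.
have sy_y : s y != y.
  apply: contra_eqN card_y => /eqP sy_y; suff -> : porbit s y = [set y] by rewrite cards1.
  by apply/setP => z; rewrite inE; apply/porbitP/eqP => [[i ->] | ->];
    [rewrite permX; elim: i => //= i -> | exists 0; rewrite expg0 perm1].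
case: (ltngtP y (s y)) => [y_lt | sy_lt | /val_inj sy_eq]; last by rewrite -sy_eq eqxx in sy_y.
  by apply/imsetP; exists y; rewrite // !inE sy_y ssy eqxx.
apply/imsetP; exists (s y); first by rewrite !inE ssy eq_sym sy_y eqxx.
by rewrite -(porbit_perm s 1 y) expg1.
Qed.

Lemma heads_le_nonleast n (s : 'S_n) :
  #|two_cycle_heads s| <= #|nonleast_two_cycle_heads s| + 1.
Proof.
have sub : nonleast_two_cycle_heads s \subset two_cycle_heads s.
  by apply/subsetP => y; rewrite inE => /andP[].
rewrite -(cardsID (nonleast_two_cycle_heads s)) (setIidPr sub) leq_add2l.
apply/card_le1_eqP => y y' /setDP[y_head /negP y_least] /setDP[y'_head /negP y'_least].
apply/val_inj/eqP; rewrite eqn_leq; apply/andP; split; rewrite leqNgt; apply/negP => lt.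
  by apply: y'_least; rewrite inE y'_head; apply/existsP; exists y; rewrite y_head.
by apply: y_least; rewrite inE y_head; apply/existsP; exists y'; rewrite y'_head.
Qed.

Lemma expg_involutive_at (T : finType) (s : {perm T}) w k :
  s (s w) = w -> (s ^+ k)%g w = if odd k then s w else w.
Proof. by move=> ssw; rewrite permX; elim: k => //= k ->; case: (odd k). Qed.

Lemma nonleast_two_cycle_heads_switchable n d (s : 'S_n) (x : 'I_d -> 'I_n) :
  injective x -> (forall i, x i \in nonleast_two_cycle_heads s) -> switchable s x.
Proof.
move=> x_inj x_nonleast.
have x_head i : x i \in two_cycle_heads s by have := x_nonleast i; rewrite inE => /andP[].
have ssx i : s (s (x i)) = x i by have := x_head i; rewrite inE => /and3P[_ /eqP].
have x_lt i : x i < s (x i) by have := x_head i; rewrite inE => /and3P[].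
have sx_x i j : s (x i) != x j.
  apply/eqP => sx_eq; have := x_lt j; rewrite -sx_eq ssx => /(ltn_trans (x_lt i)).
  by rewrite ltnn.
split=> // [| k sk_out i]; first by right.
case: (arg_minnP (P := fun z => z \in two_cycle_heads s) val (x_head i)) => z0 z0_head z0_least.
have z0Nx : z0 \notin codom x.
  apply/codomP => -[j z0_eq]; have := x_nonleast j; rewrite inE -z0_eq => /andP[_].
  by case/existsP => z /andP[/z0_least]; rewrite leqNgt => /negbTE ->.
have z0Nsx : z0 \notin codom (s \o x).
  apply/codomP => -[j /= z0_eq]; have := z0_least _ (x_head j).
  by rewrite leqNgt z0_eq x_lt.
have := sk_out _ z0Nx z0Nsx; move: z0_head; rewrite inE => /and3P[sz0 /eqP ssz0 _].
rewrite !expg_involutive_at //; case: (odd k) => // sz0_eq.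
by rewrite sz0_eq eqxx in sz0.
Qed.

Lemma card_many_twocycles_le n d m F : 0 < d -> d %| m ->
  #|[set s : 'S_n | (#[s]%g == m) && (F < ntwocycles s)]| * F ^_ d
    <= #|[set s : 'S_n | #[s]%g == m]| * (n * n).
Proof.
move=> d_gt0 d_dvd_m.
have <- : #|[set: 'I_n * 'I_n]| = n * n by rewrite cardsT card_prod card_ord.
apply: (@leq_trans (#|[set s : 'S_n | (#[s]%g == m)
                        && (F <= #|nonleast_two_cycle_heads s|)]| * F ^_ d)).
  rewrite leq_mul2r; apply/orP; right; apply/subset_leq_card/subsetP => s.
  rewrite !inE => /andP[-> F_lt] /=; rewrite -(leq_add2r 1) addn1.
  exact: leq_trans F_lt (leq_trans (ntwocycles_le_heads s) (heads_le_nonleast s)).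
apply: (card_switchable_le (i0 := Ordinal d_gt0)) => // s x _ x_inj x_nonleast.
by split; [apply: nonleast_two_cycle_heads_switchable | rewrite inE].
Qed.

Lemma mul_le_of_ffact_bound b o M c q F d e :
  0 < q -> 3 <= d -> q ^ e <= F - d -> M * q <= c * q ^ (3 * e) ->
  b * F ^_ d <= o * M -> b * q <= c * o.
Proof.
move=> q_gt0 d_ge3 qe_le Mq_le bF_le.
have qe_gt0 : 0 < q ^ e by rewrite expn_gt0 q_gt0.
have q3e_le : q ^ (3 * e) <= F ^_ d.
  rewrite mulnC expnM; apply: leq_trans (leq_pexp2l qe_gt0 d_ge3) _.
  by apply: leq_trans (expn_subn_leq_ffact F d); rewrite leq_exp2r // (leq_trans _ d_ge3).
have q3e_gt0 : 0 < q ^ (3 * e) by rewrite expn_gt0 q_gt0.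
rewrite -(leq_pmul2r q3e_gt0).
apply: (@leq_trans (b * F ^_ d * q)).
  by rewrite mulnAC leq_mul2r leq_mul2l q3e_le !orbT.
apply: (@leq_trans (o * M * q)); first by rewrite leq_mul2r bF_le orbT.
by rewrite -mulnA [c * o]mulnC -mulnA leq_mul2l Mq_le orbT.
Qed.

Definition root8 n := \max_(i < n.+1 | i ^ 8 <= n) (i : nat).

Lemma root8_pow_le n : root8 n ^ 8 <= n.
Proof. by apply: (big_ind (fun i => i ^ 8 <= n)) => // a b; rewrite /maxn; case: ifP. Qed.

Lemma leq_root8 n k : k ^ 8 <= n -> k <= root8 n.
Proof.
move=> k8_le; have k_lt : k < n.+1.
  rewrite ltnS (leq_trans _ k8_le) //; case: k {k8_le} => // k.
  by rewrite -{1}(expn1 k.+1) leq_pexp2l.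
exact: (leq_bigmax_cond (P := fun i : 'I_n.+1 => i ^ 8 <= n) (Ordinal k_lt)).
Qed.

Lemma root8_bound n : 0 < root8 n -> n <= 2 ^ 8 * root8 n ^ 8.
Proof.
move=> q_gt0; rewrite -expnMn; apply: ltnW; rewrite ltnNge; apply/negP => /leq_root8.
by rewrite mul2n -addnn -[X in _ <= X]addn0 leq_add2l leqNgt q_gt0.
Qed.

Lemma card_order_bad_le n d m : 3 <= d -> d %| m ->
  (#|[set s : 'S_n | #[s]%g == m]|
   - #|[set s : 'S_n | (#[s]%g == m) && (nfix s <= d + root8 n ^ 3)
                       && (ntwocycles s <= d + root8 n ^ 7)]|) * root8 n
    <= (2 ^ 8 + 2 ^ 16) * #|[set s : 'S_n | #[s]%g == m]|.
Proof.
move=> d_ge3 d_dvd_m; set q := root8 n; set O := [set s | _]; set G := [set s | _ && _].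
have [q0 | q_gt0] := posnP q; first by rewrite q0 muln0.
have d_gt0 : 0 < d by apply: leq_trans d_ge3.
set Bfix := [set s : 'S_n | (#[s]%g == m) && (d + q ^ 3 <= nfix s)].
set Btwo := [set s : 'S_n | (#[s]%g == m) && (d + q ^ 7 < ntwocycles s)].
have n_le := root8_bound q_gt0; rewrite -/q in n_le.
have Bfix_le : #|Bfix| * q <= 2 ^ 8 * #|O|.
  have := card_many_fixpoints_le n (d + q ^ 3) d_gt0 d_dvd_m.
  apply: (mul_le_of_ffact_bound q_gt0 d_ge3).
    by rewrite addKn.
  by rewrite (_ : 3 * 3 = 8 + 1) // expnD expn1 mulnA leq_mul2r n_le orbT.
have Btwo_le : #|Btwo| * q <= 2 ^ 16 * #|O|.
  have := card_many_twocycles_le n (d + q ^ 7) d_gt0 d_dvd_m.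
  apply: (mul_le_of_ffact_bound q_gt0 d_ge3).
    by rewrite addKn.
  apply: (@leq_trans ((2 ^ 8 * q ^ 8) * (2 ^ 8 * q ^ 8) * q ^ 5)).
    apply: leq_mul; first exact: leq_mul.
    by rewrite -{1}(expn1 q) leq_pexp2l.
  by rewrite mulnACA -!expnD -mulnA -expnD.
have O_le : #|O| <= #|G| + (#|Bfix| + #|Btwo|).
  apply: (@leq_trans #|G :|: (Bfix :|: Btwo)|).
    apply/subset_leq_card/subsetP => s; rewrite !inE => ord_s; rewrite ord_s /=.
    case: (leqP (nfix s)) => [_ | /ltnW ->]; last by rewrite orbT.
    by case: leqP; rewrite ?orbT.
  by apply: leq_trans (leq_card_setU _ _) _; rewrite leq_add2l leq_card_setU.
rewrite -leq_subLR in O_le; apply: leq_trans (leq_mul O_le (leqnn q)) _.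
by rewrite !mulnDl leq_add.
Qed.

Definition tends_to_infty (u : nat -> nat) : Prop :=
  forall K, exists N, forall n, N <= n -> K <= u n.

Lemma root8_tends_to_infty : tends_to_infty root8.
Proof. by move=> K; exists (K ^ 8) => n /leq_root8. Qed.

Local Open Scope ring_scope.

Section Asymptotics.
Variable R : realType.
Implicit Types (f g h : nat -> R) (u : nat -> nat).

Lemma tends_to_infty_mul_ge1 u (eps : R) : tends_to_infty u -> 0 < eps ->
  exists N, forall n, (N <= n)%N -> 1 <= eps * (u n)%:R.
Proof.
move=> u_infty eps_gt0; have [N uN] := u_infty (Num.Def.archi_bound eps^-1).
exists N => n /uN K_le; rewrite -ler_pdivrMl // mulr1.
apply: le_trans (ltW (archi_boundP _)) _; first by rewrite invr_ge0 ltW.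
by change ((Num.Def.archi_bound eps^-1)%:R <= (u n)%:R :> R); rewrite ler_nat.
Qed.

Lemma littleo_of_mul_le f g u : tends_to_infty u ->
  (forall n, `|f n| * (u n)%:R <= `|g n|) -> littleo f g.
Proof.
move=> u_infty fug eps eps_gt0; have [N epsu] := tends_to_infty_mul_ge1 u_infty eps_gt0.
exists N => n /epsu ge1; apply: le_trans (ler_peMr (normr_ge0 (f n)) ge1) _.
by rewrite mulrCA ler_pM2l.
Qed.

Lemma tends_to_of_mul_le (r : nat -> R) l u (C : R) N : tends_to_infty u -> 0 < C ->
  (forall n, (N <= n)%N -> `|r n - l| * (u n)%:R <= C) -> tends_to r l.
Proof.
move=> u_infty C_gt0 ruC eps eps_gt0; have epsC_gt0 := divr_gt0 eps_gt0 C_gt0.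
have [N' epsu] := tends_to_infty_mul_ge1 u_infty epsC_gt0.
exists (maxn N N') => n; rewrite geq_max => /andP[/ruC rn_le /epsu ge1].
apply: le_trans (ler_peMr (normr_ge0 _) ge1) _; rewrite mulrCA.
by apply: le_trans (ler_wpM2l (ltW epsC_gt0) rn_le) _; rewrite divfK ?gt_eqF.
Qed.

Lemma eq_littleo f f' g : f =1 f' -> littleo f g -> littleo f' g.
Proof. by move=> ff' fg eps /fg[N fgN]; exists N => n /fgN; rewrite ff'. Qed.

Lemma littleoD f f' g : littleo f g -> littleo f' g -> littleo (fun n => f n + f' n) g.
Proof.
move=> fg f'g eps eps_gt0; have eps2_gt0 : 0 < eps / 2 by rewrite divr_gt0.
have [N1 fgN] := fg _ eps2_gt0; have [N2 f'gN] := f'g _ eps2_gt0.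
exists (maxn N1 N2) => n; rewrite geq_max => /andP[/fgN f_le /f'gN f'_le].
by apply: le_trans (ler_normD _ _) _; rewrite [eps]splitr mulrDl lerD.
Qed.

Lemma littleo_le f g h : littleo f g -> (forall n, `|g n| <= `|h n|) -> littleo f h.
Proof.
move=> fg gh eps eps_gt0; have [N fgN] := fg _ eps_gt0.
by exists N => n /fgN f_le; apply: le_trans f_le _; rewrite ler_pM2l.
Qed.

Lemma sqrt_nat_le n : Num.sqrt (n%:R : R) <= n%:R.
Proof.
case: n => [|n]; first by rewrite sqrtr0.
have sqrt_ge1 : 1 <= Num.sqrt (n.+1%:R : R) by rewrite -[X in X <= _]sqrtr1 ler_sqrt // ler1n.
rewrite -[X in _ <= X](sqr_sqrtr (ler0n _ _)) expr2 ler_peMl //.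
exact: le_trans ler01 sqrt_ge1.
Qed.

Lemma root8_pow4_le_sqrt n : ((root8 n ^ 4)%:R : R) <= Num.sqrt n%:R.
Proof.
rewrite -[X in X <= _](ger0_norm (ler0n _ _)) -sqrtr_sqr ler_sqrt //.
by rewrite -natrX ler_nat -expnM root8_pow_le.
Qed.

Lemma dev_ratio_le (g o q c : nat) : (g <= o)%N -> (0 < o)%N ->
  ((o - g) * q <= c * o)%N -> `|g%:R / o%:R - 1| * q%:R <= c%:R :> R.
Proof.
move=> g_le o_gt0 bound; have o_gt0' : 0 < o%:R :> R by rewrite ltr0n.
have -> : g%:R / o%:R - 1 = - ((o - g)%N%:R / o%:R) :> R.
  by rewrite natrB // mulrBl divff ?gt_eqF // opprB.
by rewrite normrN ger0_norm ?divr_ge0 // mulrAC ler_pdivrMr // -!natrM ler_nat.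
Qed.

End Asymptotics.

Lemma prop_goodE (R : realType) n m (a b : nat) :
  prop_good n m (a%:R : R) b%:R =
  #|[set s : 'S_n | (#[s]%g == m) && (nfix s <= a)%N && (ntwocycles s <= b)%N]|%:R
    / #|[set s : 'S_n | #[s]%g == m]|%:R.
Proof. by rewrite /prop_good; congr (_%:R / _); apply: eq_card => s; rewrite !inE !ler_nat. Qed.

Lemma prop_good_dev_le (R : realType) n m d (s : 'S_n) :
  #[s]%g = m -> (3 <= d)%N -> (d %| m)%N ->
  `|prop_good n m ((d + root8 n ^ 3)%:R : R) (d + root8 n ^ 7)%:R - 1| * (root8 n)%:R
    <= (2 ^ 8 + 2 ^ 16)%:R.
Proof.
move=> ord_s d_ge3 d_dvd_m; rewrite prop_goodE.
apply: dev_ratio_le; last exact: card_order_bad_le.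
  by apply/subset_leq_card/subsetP => t; rewrite !inE => /andP[/andP[-> _] _].
by apply/card_gt0P; exists s; rewrite inE ord_s.
Qed.

Theorem lemma5p7 (R : realType) (m d : nat -> nat)
  (N0 : nat)
  (hm : forall n : nat, (N0 <= n)%N -> exists s : 'S_n, #[s]%g = m n)
  (hdvd : forall n : nat, (N0 <= n)%N -> (d n %| m n)%N)
  (hd3 : forall n : nat, (N0 <= n)%N -> (3 <= d n)%N)
  (hdo : littleo (fun n => (d n)%:R : R) (fun n => Num.sqrt (n%:R : R))) :
  exists a b : nat -> R,
    littleo a (fun n => Num.sqrt (n%:R : R)) /\
    littleo b (fun n => (n%:R : R)) /\
    tends_to (fun n => prop_good n (m n) (a n) (b n)) 1.
Proof.
exists (fun n => (d n + root8 n ^ 3)%:R), (fun n => (d n + root8 n ^ 7)%:R).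
split; [|split].
- apply: (eq_littleo (f := fun n => (d n)%:R + (root8 n ^ 3)%:R)) => [n | ].
    by rewrite natrD.
  apply: littleoD hdo (littleo_of_mul_le root8_tends_to_infty _) => n.
  rewrite !ger0_norm ?sqrtr_ge0 // -natrM -expnSr; exact: root8_pow4_le_sqrt.
- apply: (eq_littleo (f := fun n => (d n)%:R + (root8 n ^ 7)%:R)) => [n | ].
    by rewrite natrD.
  apply: littleoD (littleo_le hdo _) (littleo_of_mul_le root8_tends_to_infty _) => n.
    by rewrite !ger0_norm ?sqrtr_ge0 // sqrt_nat_le.
  by rewrite !ger0_norm // -natrM -expnSr ler_nat root8_pow_le.
- apply: (tends_to_of_mul_le (N := N0) root8_tends_to_infty (C := (2 ^ 8 + 2 ^ 16)%:R)).
    by rewrite ltr0n.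
  move=> n n_ge; have [s ord_s] := hm n n_ge.
  exact: prop_good_dev_le ord_s (hd3 n n_ge) (hdvd n n_ge).
Qed.
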